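(* Let $X$ be a Banach space and $(x_n)_{n\in\mathbb{N}}$ a sequence in $X$. Let $E=\left\{s \in S : \left(\sum_{i=1}^n x_{s(i)}\right)_n \text{ is bounded}\right\}$ and $F=\left\{p \in P : \left(\sum_{i=1}^n x_{p(i)}\right)_n \text{ is bounded}\right\}$. If $E \neq S$ (equivalently, $F \neq P$), then $E$ is meager in $S$ and $F$ is meager in $P$.
   Context: $S=\{s\in\mathbb{N}^{\mathbb{N}} : s \text{ strictly increasing}\}$ and $P=\{p\in\mathbb{N}^{\mathbb{N}} : p \text{ a bijection of } \mathbb{N}\}$, both with the subspace topology of $\mathbb{N}^{\mathbb{N}}$ carrying the product topology of discrete spaces $\mathbb{N}$ (both are Polish spaces). *)

From HB Require Import structures.
From mathcomp Require Import all_boot all_order all_algebra.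
From mathcomp Require Import all_classical all_reals all_analysis.
Set Implicit Arguments. Unset Strict Implicit. Unset Printing Implicit Defensive.
Import Order.TTheory GRing.Theory Num.Theory.
Local Open Scope classical_set_scope.
Local Open Scope ring_scope.

(* The Baire space N^N: the type [nat -> nat] with the product topology
   (topology of pointwise convergence, [prod_topology]) of discrete copies of
   [nat] ([nat] carries the discrete topology in mathcomp-analysis). *)
Notation NN := {ptws nat -> nat}.

Definition Sset : set NN := [set s | forall i j, (i < j)%N -> (s i < s j)%N].
Definition Pset : set NN := [set p | bijective p].

(* The subspaces S and P, as subtypes with the initial (= subspace) topology
   induced by the inclusion into N^N. *)
Notation Stype := (initial_topology (fun s : set_type Sset => val s)).
Notation Ptype := (initial_topology (fun p : set_type Pset => val p)).

Definition nowhere_dense (T : topologicalType) (N : set T) : Prop :=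
  (closure N)° = set0.
Definition meager (T : topologicalType) (M : set T) : Prop :=
  exists N : nat -> set T, (forall k, nowhere_dense (N k)) /\ M `<=` \bigcup_k N k.

(* partial sums  n |-> \sum_{i<n} x (f i)  (i.e. x_{f(0)} + ... + x_{f(n-1)}) *)
Definition psums (R : realType) (X : normedModType R) (x : nat -> X) (f : nat -> nat)
  : nat -> X := fun n => \sum_(i < n) x (f i).

Definition Eset (R : realType) (X : normedModType R) (x : nat -> X) : set Stype :=
  [set s : Stype | bounded_fun (psums x (val s))].
Definition Fset (R : realType) (X : normedModType R) (x : nat -> X) : set Ptype :=
  [set p : Ptype | bounded_fun (psums x (val p))].

From HB Require Import structures.
From mathcomp Require Import all_boot all_order all_algebra.
From mathcomp Require Import all_classical all_reals all_analysis lra zify.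
Import Order.TTheory GRing.Theory Num.Theory.
Local Open Scope classical_set_scope.

(* Fix s in S whose partial sums are unbounded. For a bound M, the points whose
   partial sums all have norm at most M form a closed set, because each partial
   sum depends on finitely many coordinates only. This set has empty interior:
   any finite prefix of a point of S (resp. P) can be continued by a tail of s,
   taken far enough to stay above the prefix, and some partial sum of the result
   exceeds M; in P the resulting injection is then completed to a bijection that
   agrees with it on a long enough prefix. So E and F are countable unions of
   nowhere dense sets. *)

Lemma initial_cvg (S : choiceType) (T : topologicalType) (f : S -> T)
    (F : set_system S) (s : S) :
  Filter F -> f @ F --> f s -> F --> (s : initial_topology f).
Proof.
move=> FF fFs A; rewrite nbhsE => -[B [[C oC CB] Bs] BA].
have /fFs fC : nbhs (f s) C by apply: open_nbhs_nbhs; split => //; rewrite -CB in Bs.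
have FC : F (f @^-1` C) := fC.
by apply: filterS FC => t Ct; apply: BA; rewrite -CB.
Qed.

Lemma nowhere_dense_cvgC (T : topologicalType) (C : set T) :
  closed C ->
  (forall z : T, exists2 w : nat -> T, w @ \oo --> z & forall k, ~ C (w k)) ->
  nowhere_dense C.
Proof.
move=> /closure_id Ccl approx; rewrite /nowhere_dense -Ccl.
apply/seteqP; split => // z Cz; have [w wz wC] := approx z.
by have [k _ /(_ k (leqnn k))/wC] := wz _ Cz.
Qed.

Lemma closed_norm_le {R : realType} (X : normedModType R) (M : R) :
  closed [set y : X | (`|y| <= M)%R].
Proof.
apply: (@preimage_closed X R^o (@Num.norm _ X) [set r | (r <= M)%R]).
  by move=> y _; exact: norm_continuous.
exact: closed_le.
Qed.

Lemma bounded_fun_le_nat {R : realType} {X : normedModType R} (f : nat -> X) :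
  bounded_fun f -> exists k : nat, forall n, (`|f n| <= k%:R)%R.
Proof.
move=> /(ex_bound _ (PF := @globally_properfilter nat setT 0%N I)) [M fM].
exists (Num.Def.archi_bound `|M|) => n.
apply: le_trans (fM n I) _; apply: le_trans (ler_norm M) _.
exact/ltW/archi_boundP/normr_ge0.
Qed.

Lemma unbounded_beyond {R : realType} {X : normedModType R} (f : nat -> X) :
  ~ bounded_fun f -> forall (B : R) (J : nat), exists2 n, (J <= n)%N & (B < `|f n|)%R.
Proof.
move=> fnb B J; apply: contra_notP fnb => small.
apply/(ex_bound _ (PF := @globally_properfilter nat setT 0%N I)).
have sum_ge0 : (0 <= \sum_(i < J) `|f i|)%R by apply: sumr_ge0.
exists (`|B| + \sum_(i < J) `|f i|)%R => n _ /=; case: (ltnP n J) => [nJ | Jn].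
  apply: (@le_trans _ _ (\sum_(i < J) `|f i|)%R); last by rewrite lerDr.
  by rewrite (bigD1 (Ordinal nJ)) //= lerDl; apply: sumr_ge0.
have fnB : (`|f n| <= B)%R by rewrite leNgt; apply/negP => Bn; apply: small; exists n.
by apply: le_trans fnB (le_trans (ler_norm B) _); rewrite lerDl.
Qed.

Lemma near_prefix_NN (c : NN) n : \forall f \near c, forall i, (i < n)%N -> f i = c i.
Proof.
elim: n => [|n IH]; first by apply: filterS filterT => f _ [].
have fn : \forall f \near c, f n = c n.
  have := @proj_continuous nat (fun _ => nat) n c [set c n].
  by rewrite nbhs_principalE; apply; exact/principal_filterP.
apply: filterS (filterI IH fn) => f [fpre fn'] i.
by rewrite ltnS leq_eqVlt => /orP[/eqP->|/fpre].
Qed.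

Lemma cvg_eventually_eq_NN (w : nat -> NN) (c : NN) :
  (forall i, \forall k \near \oo, w k i = c i) -> w @ \oo --> c.
Proof.
move=> wc; apply/pointwise_cvgP => i A.
rewrite nbhs_principalE => /principal_filterP Aci.
by apply: filterS (wc i) => k /= wkc; rewrite /preimage /= wkc.
Qed.

Lemma psums_prefix {R : realType} {X : normedModType R} (x : nat -> X) (f g : nat -> nat) n :
  (forall i, (i < n)%N -> f i = g i) -> psums x f n = psums x g n.
Proof. by move=> fg; apply: eq_bigr => i _; rewrite fg. Qed.

Section Subspace.
Context (D : set NN).
Local Notation W := (initial_topology (fun s : set_type D => val s)).

Lemma near_prefix (t : W) n : \forall u \near t, forall i, (i < n)%N -> val u i = val t i.
Proof. exact: initial_continuous (near_prefix_NN (val t) n). Qed.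

Lemma cvg_prefix (w : nat -> W) (z : W) :
  (forall k i, (i < k)%N -> val (w k) i = val z i) -> w @ \oo --> z.
Proof.
move=> wz; apply: initial_cvg; apply: cvg_eventually_eq_NN => i.
by exists i.+1 => // k; apply: wz.
Qed.

Context {R : realType} {X : normedModType R} (x : nat -> X).

Lemma continuous_psums n : continuous (fun t : W => psums x (val t) n).
Proof.
move=> t; apply: (cvg_near_cst _ (FF := nbhs_filter t)); near=> u.
by apply: psums_prefix; near: u; exact: near_prefix.
Unshelve. all: by end_near.
Qed.

Lemma closed_psums_le (M : R) :
  closed [set t : W | forall n, (`|psums x (val t) n| <= M)%R].
Proof.
have -> : [set t : W | forall n, (`|psums x (val t) n| <= M)%R] =
    \bigcap_(n in setT) (fun t : W => psums x (val t) n) @^-1` [set y | (`|y| <= M)%R].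
  by apply/seteqP; split => [t tM n _ | t tM n]; [exact: tM | exact: tM n I].
apply: closed_bigI => n _; apply: (continuous_closedP _).1 (continuous_psums n) _ _.
exact: closed_norm_le.
Qed.

Definition prefix_extends_unbounded := forall (M : R) (z : W) (k : nat),
  exists t : W, (forall i, (i < k)%N -> val t i = val z i) /\
                exists n, (M < `|psums x (val t) n|)%R.

Lemma nowhere_dense_psums_le (M : R) : prefix_extends_unbounded ->
  nowhere_dense [set t : W | forall n, (`|psums x (val t) n| <= M)%R].
Proof.
move=> ext; apply: nowhere_dense_cvgC; first exact: closed_psums_le.
move=> z; have [w wzM] := choice (ext M z).
exists w => [|k wkM]; first by apply: cvg_prefix => k; case: (wzM k).
by have [_ [n /lt_le_trans/(_ (wkM n))]] := wzM k; rewrite ltxx.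
Qed.

Lemma meager_bounded_psums : prefix_extends_unbounded ->
  meager [set t : W | bounded_fun (psums x (val t))].
Proof.
move=> ext.
exists (fun k : nat => [set t : W | forall n, (`|psums x (val t) n| <= k%:R)%R]).
split=> [k|t /bounded_fun_le_nat [k tk]]; first exact: nowhere_dense_psums_le.
by exists k.
Qed.

End Subspace.

Lemma Sset_geq_id {s : NN} : Sset s -> forall j, (j <= s j)%N.
Proof. by move=> sS; elim=> [|j IH] //; apply: leq_ltn_trans IH (sS _ _ (ltnSn j)). Qed.

Lemma Sset_inj {s : NN} : Sset s -> injective s.
Proof. by move=> sS i j sij; case: (ltngtP i j) => // /sS; rewrite sij ltnn. Qed.

Definition splice (z s : nat -> nat) (k J : nat) : nat -> nat :=
  fun i => if (i < k)%N then z i else s (i - k + J)%N.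

Lemma splice_prefix z s k J i : (i < k)%N -> splice z s k J i = z i.
Proof. by rewrite /splice => ->. Qed.

Lemma psums_splice {R : realType} {X : normedModType R} (x : nat -> X) z s k J n :
  psums x (splice z s k J) (k + n) =
  (psums x z k + (psums x s (J + n) - psums x s J))%R.
Proof.
rewrite /psums !big_split_ord /=; congr (_ + _)%R.
  by apply: eq_bigr => i _; rewrite splice_prefix.
rewrite addrAC subrr add0r; apply: eq_bigr => i _.
by rewrite /splice /= ltnNge leq_addr /= addKn addnC.
Qed.

Definition prefix_bound (z : nat -> nat) (k : nat) : nat := (\max_(i < k) z i).+1.

Lemma prefix_bound_lt {z : nat -> nat} {k : nat} {s : NN} {i m : nat} :
  Sset s -> (i < k)%N -> (z i < s (m + prefix_bound z k))%N.
Proof.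
move=> sS ik; apply: (@leq_trans (prefix_bound z k)).
  by rewrite ltnS (leq_bigmax (Ordinal ik)).
exact: leq_trans (leq_addl m _) (Sset_geq_id sS _).
Qed.

Lemma splice_Sset {z s : NN} (k : nat) :
  Sset z -> Sset s -> Sset (splice z s k (prefix_bound z k)).
Proof.
move=> zS sS i j ij; rewrite /splice; case: ifP => ik; case: ifP => jk.
- exact: zS.
- exact: prefix_bound_lt.
- lia.
- apply: sS; lia.
Qed.

Lemma splice_inj {z : nat -> nat} {s : NN} (k : nat) :
  injective z -> Sset s -> injective (splice z s k (prefix_bound z k)).
Proof.
move=> zinj sS i j; rewrite /splice; case: ifP => ik; case: ifP => jk.
- exact: zinj.
- by move=> zs; have := prefix_bound_lt (z := z) (m := j - k) sS ik; rewrite zs ltnn.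
- by move=> sz; have := prefix_bound_lt (z := z) (m := i - k) sS jk; rewrite -sz ltnn.
- by move/(Sset_inj sS); lia.
Qed.

Definition swapn (a b y : nat) : nat := if y == a then b else if y == b then a else y.

Lemma swapnK a b : involutive (swapn a b).
Proof.
move=> y; rewrite /swapn.
case: (eqVneq y a) => [->|ya]; first by rewrite eqxx; case: eqP.
case: (eqVneq y b) => [->|yb]; first by rewrite eqxx.
by rewrite (negbTE ya) (negbTE yb).
Qed.

Lemma prefix_extends_bijective (f : nat -> nat) L :
  {in gtn L &, injective f} ->
  exists2 q : nat -> nat, bijective q & forall i, (i < L)%N -> q i = f i.
Proof.
elim: L => [|L IH] finj; first by exists id => //; exists id.
have [|q qbij qf] := IH.
  by move=> i j iL jL; apply: finj; rewrite inE ltnW.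
exists (swapn (q L) (f L) \o q).
  by apply: bij_comp qbij; apply: inv_bij; exact: swapnK.
move=> i; rewrite ltnS leq_eqVlt => /orP[/eqP->|iL] /=; first by rewrite /swapn eqxx.
have fiqL : f i != q L.
  by apply/eqP; rewrite -(qf _ iL) => /(bij_inj qbij) iLe; move: iL; rewrite iLe ltnn.
have fifL : f i != f L.
  apply/eqP => /finj; rewrite !inE ltnSn ltnW // => /(_ isT isT) iLe.
  by move: iL; rewrite iLe ltnn.
by rewrite /swapn qf // (negbTE fiqL) (negbTE fifL).
Qed.

Section UnboundedTail.
Context {R : realType} {X : normedModType R} (x : nat -> X) (s : NN).
Hypotheses (sS : Sset s) (snb : ~ bounded_fun (psums x s)).

Lemma unbounded_psums_splice z k J (M : R) :
  exists n, (M < `|psums x (splice z s k J) n|)%R.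
Proof.
set a := psums x z k; set c := psums x s J.
have [N JN big] := unbounded_beyond _ snb (M + `|a| + `|c|)%R J.
exists (k + (N - J))%N; rewrite psums_splice subnKC //.
set b := psums x s N in big *.
have tri : (`|b| <= `|a + (b - c)| + `|a| + `|c|)%R.
  rewrite -[b in leLHS](subrK c) -[(b - c)%R in leLHS](addKr a).
  apply: le_trans (ler_normD _ _) _; rewrite lerD2r.
  by apply: le_trans (ler_normD _ _) _; rewrite normrN addrC.
lra.
Qed.

Lemma Sset_prefix_extends_unbounded : prefix_extends_unbounded Sset x.
Proof.
move=> M z k; have zS : Sset (val z) := set_mem (valP z).
have [n Mn] := unbounded_psums_splice (val z) k (prefix_bound (val z) k) M.
exists (exist _ (splice (val z) s k (prefix_bound (val z) k) : NN)
              (mem_set (splice_Sset k zS sS))).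
by split; [exact: splice_prefix | exists n].
Qed.

Lemma Pset_prefix_extends_unbounded : prefix_extends_unbounded Pset x.
Proof.
move=> M z k; have zbij : bijective (val z) := set_mem (valP z).
set f := splice (val z) s k (prefix_bound (val z) k).
have [n Mn] := unbounded_psums_splice (val z) k (prefix_bound (val z) k) M.
have finj : injective f := splice_inj k (bij_inj zbij) sS.
have [q qbij qf] := prefix_extends_bijective f (n + k) (in2W finj).
exists (exist _ (q : NN) (mem_set (qbij : Pset q))); split => /=.
  by move=> i ik; rewrite qf; [exact: splice_prefix | lia].
by exists n; rewrite (psums_prefix x q f) // => i iN; apply: qf; lia.
Qed.

End UnboundedTail.

Theorem mainTheorem2 (R : realType) (X : completeNormedModType R) (x : nat -> X) :
  Eset x <> setT -> meager (Eset x) /\ meager (Fset x).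
Proof.
move=> /eqP/setTPn[s sE]; have sS : Sset (val s) := set_mem (valP s).
split; apply: meager_bounded_psums.
  exact: Sset_prefix_extends_unbounded sS sE.
exact: Pset_prefix_extends_unbounded sS sE.
Qed.
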